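(* Let $G$ be a profinite group and suppose an element $g\in G$ has a countable Engel sink. Then there are positive integers $i,k$ and a coset $Nb$ of an open normal subgroup $N$ of $G$ such that $[[nb,{}_i g],g^k]=1$ for all $n\in N$.
   Context: Commutators are left-normed, $[a,b]=a^{-1}b^{-1}ab$, and $[x,{}_n g]=[x,g,\dots,g]$ with $g$ repeated $n$ times. An Engel sink of an element $g$ of a group $G$ is a set $\mathscr E(g)\subseteq G$ such that for every $x\in G$ there is a positive integer $n(x,g)$ with $[x,{}_n g]\in\mathscr E(g)$ for all $n\ge n(x,g)$. ''Countable'' means finite or denumerable. *)

From mathcomp Require Import all_boot all_order all_algebra.
From mathcomp Require Import all_classical all_reals all_analysis.
Set Implicit Arguments. Unset Strict Implicit. Unset Printing Implicit Defensive.
Local Open Scope classical_set_scope.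

Definition group_axioms {G : Type} (mul : G -> G -> G) (inv : G -> G) (one : G) :
  Prop :=
  [/\ forall x y z, mul x (mul y z) = mul (mul x y) z,
      forall x, mul one x = x,
      forall x, mul x one = x,
      forall x, mul (inv x) x = one &
      forall x, mul x (inv x) = one].

Definition is_profinite_group {G : topologicalType}
  (mul : G -> G -> G) (inv : G -> G) (one : G) : Prop :=
  group_axioms mul inv one /\
  continuous (fun p : G * G => mul p.1 p.2) /\
  continuous inv /\
  compact [set: G] /\
  hausdorff_space G /\
  totally_disconnected [set: G].

Definition grp_comm {G : Type} (mul : G -> G -> G) (inv : G -> G) (a b : G) : G :=
  mul (mul (mul (inv a) (inv b)) a) b.

Definition engel_comm {G : Type} (mul : G -> G -> G) (inv : G -> G)
  (x : G) (n : nat) (g : G) : G :=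
  iter n (fun z => grp_comm mul inv z g) x.

Definition gpow {G : Type} (mul : G -> G -> G) (one : G) (g : G) (k : nat) : G :=
  iter k (mul g) one.

Definition engel_sink {G : Type} (mul : G -> G -> G) (inv : G -> G)
  (g : G) (E : set G) : Prop :=
  forall x : G, exists n0 : nat, (0 < n0)%N /\
    forall n : nat, (n0 <= n)%N -> E (engel_comm mul inv x n g).

Definition normal_subgroup {G : Type} (mul : G -> G -> G) (inv : G -> G)
  (one : G) (N : set G) : Prop :=
  [/\ N one,
      forall x y, N x -> N y -> N (mul x y),
      forall x, N x -> N (inv x) &
      forall x n, N n -> N (mul (mul (inv x) n) x)].

(* For m in nat and e in the countable sink E, the sets
   {x | [x, _(m+1) g] = e} are closed and, by the definition of an Engel sink,
   cover G; by the Baire category theorem for the compact Hausdorff space G one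
   of them contains a nonempty open set U, i.e. x |-> [x, _i g] is constant on U
   for i = m + 1.  As G is compact, Hausdorff and totally disconnected, 1 has a
   clopen neighbourhood C with C b inside U, and N = {x | C x^y = C for all y}
   is a normal subgroup inside C, open by the tube lemma; compactness also gives
   k > 0 with g^k in N.  Conjugation by h = g^k fixes g and maps the coset N b
   into itself, so it fixes the constant value [n b, _i g], which is to say
   [[n b, _i g], g^k] = 1. *)

From HB Require Import structures.
From mathcomp Require Import all_boot all_order all_algebra.
From mathcomp Require Import all_classical all_reals all_analysis.
Set Implicit Arguments.
Local Open Scope classical_set_scope.

Section CompactBaire.
Variable T : topologicalType.
Hypotheses (cptT : compact [set: T]) (hsdfT : hausdorff_space T).

Lemma open_shrink_avoid (U F : set T) : open U -> closed F -> ~ U `<=` F ->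
  exists V, [/\ open V, V !=set0 & closure V `<=` U `\` F].
Proof.
move=> oU cF /existsNP[y /not_implyP[Uy Fy]].
have UFy : nbhs y (U `\` F).
  by apply: open_nbhs_nbhs; split => //; exact/openI/closed_openC.
have [A Ay clAUF] := @compact_regular T y setT hsdfT cptT filterT _ UFy.
exists A°; split; first exact: open_interior.
- by exists y.
- exact: subset_trans (closureS (@interior_subset _ A)) clAUF.
Qed.

Lemma compact_closed_seq_cover_interior (F : nat -> set T) :
  [set: T] !=set0 -> (forall j, closed (F j)) -> (forall x, exists j, F j x) ->
  exists j, (F j)° !=set0.
Proof.
move=> T0 clF covF; apply: contrapT => /forallNP noint.
(* Nested nonempty open sets s j with closure (s j.+1) disjoint from F j; a
   cluster point of the sequence lies in no F j. *)
pose opn := {U : set T | open U /\ U !=set0}.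
have /choice[shrink shrinkP] : forall jU : nat * opn,
    exists V : opn, closure (sval V) `<=` sval jU.2 `\` F jU.1.
  move=> [j [U [oU U0]]].
  have UF : ~ U `<=` F j.
    move=> UF; case: U0 => x Ux; apply: (noint j); exists x.
    exact/(filterS UF)/open_nbhs_nbhs.
  have [V [oV V0 clV]] := open_shrink_avoid oU (clF j) UF.
  by exists (exist _ V (conj oV V0)).
pose top : opn := exist _ setT (conj openT T0).
pose fix s j := if j is j'.+1 then shrink (j', s j') else top.
have clsS j : closure (sval (s j.+1)) `<=` sval (s j) `\` F j := shrinkP (j, s j).
have sS j : sval (s j.+1) `<=` sval (s j).
  by move=> x /subset_closure /clsS[].
have sD := homo_leq (f := fun j => sval (s j)) (r := fun A B => B `<=` A)
  (fun=> @subset_refl _ _) (fun _ _ _ yx zy => subset_trans zy yx) sS.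
pose S := filter_from setT (fun j => sval (s j)).
have SF : ProperFilter S.
  apply: filter_from_proper => [|j _]; last by case: (svalP (s j)).
  apply: filter_fromT_filter => [|i j]; first by exists 0%N.
  by exists (maxn i j) => x sx; split; apply: sD sx; rewrite ?leq_maxl ?leq_maxr.
have [p [_ clp]] := cptT SF filterT.
have [j Fjp] := covF p.
have /clsS[] // : closure (sval (s j.+1)) p.
by rewrite clusterE in clp; apply: clp; exists j.+1.
Qed.

Lemma compact_countable_closed_cover_interior (I : Type) (D : set I)
    (F : I -> set T) :
  [set: T] !=set0 -> countable D -> (forall i, D i -> closed (F i)) ->
  (forall x, exists2 i, D i & F i x) -> exists2 i, D i & (F i)° !=set0.
Proof.
move=> T0 /countable_injP[f finj] clF covF.
pose B n := \bigcup_(i in [set i | D i /\ f i = n]) F i.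
have B_fiber n i : D i -> f i = n -> B n = F i.
  move=> Di fin; apply/seteqP; split=> [x [k [Dk fkn] Fkx]|x Fix]; last by exists i.
  by have <- // : k = i by apply: finj; rewrite ?inE ?fkn.
have clB n : closed (B n).
  have [[i [Di fin]]|nofiber] := pselect (exists i, D i /\ f i = n).
    by rewrite (B_fiber n i Di fin); exact: clF.
  suff -> : B n = set0 by exact: closed0.
  by apply/seteqP; split=> // x [i Dfi]; case: nofiber; exists i.
have [|n [x Bx]] := compact_closed_seq_cover_interior B T0 clB.
  by move=> x; have [i Di Fix] := covF x; exists (f i), i.
have [i [Di fin] _] := nbhs_singleton Bx.
by exists i => //; rewrite -(B_fiber n i Di fin); exists x.
Qed.

End CompactBaire.

Section QuasiComponent.
Variable T : topologicalType.
Hypotheses (cptT : compact [set: T]) (hsdfT : hausdorff_space T).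

Definition quasi_component (x : T) :=
  \bigcap_(C in [set C : set T | clopen C /\ C x]) C.

Lemma quasi_component_closed x : closed (quasi_component x).
Proof. by apply: closed_bigI => C [[]]. Qed.

Lemma quasi_component_refl x : quasi_component x x.
Proof. by move=> C []. Qed.

Lemma quasi_component_clopen_sub x (V : set T) : open V ->
  quasi_component x `<=` V -> exists C, [/\ clopen C, C x & C `<=` V].
Proof.
move=> oV QV; apply: contrapT => /forallNP noC.
pose clx := [set C : set T | clopen C /\ C x].
pose S := filter_from clx (fun C => C `\` V).
have SF : ProperFilter S.
  apply: filter_from_proper => [|C [clC Cx]]; last first.
    apply: contrapT => /set0P/negP/negPn/eqP; rewrite setD_eq0 => CV.
    exact: (noC C).
  apply: filter_from_filter => [|C1 C2 [clC1 C1x] [clC2 C2x]].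
    by exists setT; split => //; exact: clopenT.
  exists (C1 `&` C2); first by split; [exact: clopenI|].
  by move=> z [[C1z C2z] Vz].
have [p [_ clp]] := cptT SF filterT.
have CVp C : clx C -> (C `\` V) p.
  move=> IC; have /closure_id-> : closed (C `\` V).
    by apply: closedI; [case: IC => -[] | exact: open_closedC].
  by rewrite clusterE in clp; apply: clp; exists C.
have [_ []] := CVp setT (conj clopenT Logic.I).
by apply: QV => C /CVp[].
Qed.

Lemma quasi_component_sub_closed x (A B : set T) : closed A -> closed B ->
  A `&` B = set0 -> quasi_component x `<=` A `|` B -> A x ->
  quasi_component x `<=` A.
Proof.
move=> clA clB AB0 QAB Ax.
have nbhsA_nB : set_nbhs A (~` B).
  apply/set_nbhsP; exists (~` B); split => //; first exact: closed_openC.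
  by move=> z Az Bz; rewrite -[False]/(set0 z) -AB0.
have [U /set_nbhsP[UA [oUA AUA UAU]] clUB] :=
  compact_normal hsdfT cptT clA nbhsA_nB.
pose UB := ~` closure U.
have oUB : open UB by exact/closed_openC/closed_closure.
have BUB : B `<=` UB by move=> z Bz /clUB.
have UAUB0 z : UA z -> UB z -> False by move=> /UAU/subset_closure.
have [C [[oC clC] Cx CU]] : exists C, [/\ clopen C, C x & C `<=` UA `|` UB].
  apply: quasi_component_clopen_sub; first exact: openU.
  by move=> z /QAB[/AUA|/BUB]; [left|right].
have clCUA : clopen (C `&` UA).
  split; first exact: openI.
  suff -> : C `&` UA = C `\` UB by apply: closedI => //; exact: open_closedC.
  apply/seteqP; split=> z [Cz]; first by move=> UAz; split=> // /(UAUB0 z UAz).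
  by move=> nUBz; split=> //; case: (CU z Cz).
move=> z Qz; have [_ UAz] := Qz _ (conj clCUA (conj Cx (AUA x Ax))).
by case: (QAB z Qz) => // /BUB /(UAUB0 z UAz).
Qed.

Lemma quasi_component_connected x : connected (quasi_component x).
Proof.
apply/connectedP => E [E0 QE sepE].
have [b Ebx] : exists b, E b x.
  by move: (@quasi_component_refl x); rewrite QE => -[]; [exists false|exists true].
have [sepl sepr] : separated (E b) (E (~~ b)) by case: b {Ebx}; rewrite // separatedC.
have {}sepl : closure (E b) `&` E (~~ b) `<=` set0 by rewrite sepl.
have {}sepr : E b `&` closure (E (~~ b)) `<=` set0 by rewrite sepr.
pose Q := quasi_component x.
have QEb : Q `<=` E b `|` E (~~ b).
  by rewrite /Q QE; case: b {Ebx sepl sepr} => z [] ?; [right|left|left|right].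
have clQ b' : closed (Q `&` closure (E b')).
  by apply: closedI; [exact: quasi_component_closed | exact: closed_closure].
have QclEb : Q `<=` Q `&` closure (E b).
  apply: (@quasi_component_sub_closed x _ (Q `&` closure (E (~~ b)))) => //.
  - apply/seteqP; split=> // z [[Qz clbz] [_ clnbz]].
    by case: (QEb z Qz) => Ez; [apply: (sepr z) | apply: (sepl z)].
  - by move=> z Qz; case: (QEb z Qz) => Ez; [left|right]; split=> //; exact: subset_closure.
  - by split; [exact: quasi_component_refl | exact: subset_closure].
have [y Ey] := E0 (~~ b).
have Qy : Q y by rewrite /Q QE; case: b {Ebx sepl sepr QEb QclEb} Ey; [left|right].
by apply: (sepl y); split=> //; case: (QclEb y Qy).
Qed.

Lemma totally_disconnected_clopen_nbhs (x : T) (W : set T) :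
  totally_disconnected [set: T] -> open W -> W x ->
  exists C, [/\ clopen C, C x & C `<=` W].
Proof.
move=> tdT oW Wx; apply: quasi_component_clopen_sub oW _.
have : quasi_component x `<=` connected_component [set: T] x.
  apply: connected_component_max => //; first exact: quasi_component_refl.
  exact: quasi_component_connected.
by rewrite tdT // => Qx z /Qx ->.
Qed.

End QuasiComponent.

Lemma near_clopen_iff (X T : topologicalType) (C : set T) (f h : X -> T) a :
  clopen C -> {for a, continuous f} -> {for a, continuous h} -> f a = h a ->
  \forall z \near a, C (f z) <-> C (h z).
Proof.
move=> [oC clC] fa ha fha.
wlog Cfa : C oC clC / C (f a).
  move=> wlogC; have [|nCfa] := pselect (C (f a)); first exact: wlogC.
  apply: filterS (wlogC _ (closed_openC clC) (open_closedC oC) nCfa) => z.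
  move=> [nCf nCh]; split=> Cz; apply: contrapT => nCz.
  - exact: nCh nCz Cz.
  - exact: nCf nCz Cz.
have Cf : \forall z \near a, C (f z) by apply: fa; exact: open_nbhs_nbhs.
have Ch : \forall z \near a, C (h z).
  by apply: ha; rewrite -fha; exact: open_nbhs_nbhs.
by near=> z; split=> _; [exact: (near Ch z) | exact: (near Cf z)].
Unshelve. all: by end_near. Qed.

Local Open Scope group_scope.

Section GroupLemmas.
Context {H : groupType}.
Local Notation normal N := (normal_subgroup *%g (@monoid.inv H) 1 N).

Lemma conjg_iter_commg (x g y : H) m : g ^ y = g ->
  iter m (fun z => [~ z, g]) x ^ y = iter m (fun z => [~ z, g]) (x ^ y).
Proof. by move=> gy; elim: m => [|m IHm] //=; rewrite conjRg IHm gy. Qed.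

Lemma normal_conjg (N : set H) x n : normal N -> N n -> N (n ^ x).
Proof. by case=> _ _ _ NJ /(NJ x); rewrite conjgE mulgA. Qed.

Lemma normal_conjg_coset (N : set H) n b h : normal N -> N n -> N h ->
  N ((n * b) ^ h * b^-1).
Proof.
move=> nN Nn Nh; have [_ NM NV _] := nN.
have -> : (n * b) ^ h * b^-1 = h^-1 * (n * h ^ b^-1) by rewrite !conjgE invgK !mulgA.
exact: NM _ _ (NV _ Nh) (NM _ _ Nn (normal_conjg b^-1 _ nN Nh)).
Qed.

Definition conj_stab (C : set H) : set H :=
  [set x | forall y c, C c <-> C (c * x ^ y)].

Lemma conj_stab_normal (C : set H) : normal (conj_stab C).
Proof.
split=> [y c|a b Ca Cb y c|a Ca y c|x n Cn y c].
- by rewrite conj1g mulg1.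
- by rewrite conjMg mulgA -(Cb y) -(Ca y).
- by rewrite conjVg (Ca y (c * (a ^ y)^-1)) mulgVK.
- by rewrite -mulgA -conjgE -conjgM; exact: Cn.
Qed.

Lemma conj_stab_sub (C : set H) : C 1 -> conj_stab C `<=` C.
Proof. by move=> C1 x /(_ 1 1)[/(_ C1)]; rewrite conjg1 mul1g. Qed.

End GroupLemmas.

(* [G] with the group law given by the axioms, so that MathComp's group theory
   (conjg, commg, expg) applies. *)
Definition group_of {G : topologicalType} {mul : G -> G -> G} {inv : G -> G}
  {one : G} of group_axioms mul inv one : Type := G.

Section GroupOf.
Context {G : topologicalType} {mul : G -> G -> G} {inv : G -> G} {one : G}.
Variable hG : group_axioms mul inv one.

HB.instance Definition _ := Topological.on (group_of hG).

Let mulA : associative mul. Proof. by case: hG. Qed.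
Let mul1x : left_id one mul. Proof. by case: hG. Qed.
Let mulx1 : right_id one mul. Proof. by case: hG. Qed.
Let mulVx : left_inverse one inv mul. Proof. by case: hG. Qed.
Let mulxV : right_inverse one inv mul. Proof. by case: hG. Qed.

HB.instance Definition _ :=
  isGroup.Build (group_of hG) mulA mul1x mulx1 mulVx mulxV.

Local Notation Gg := (group_of hG).

Lemma grp_commE (x y : Gg) : grp_comm mul inv x y = [~ x, y].
Proof. by rewrite /commg /conjg !mulgA. Qed.

Lemma engel_commE (x g : Gg) m :
  engel_comm mul inv x m g = iter m (fun z => [~ z, g]) x.
Proof. by elim: m => //= m <-; rewrite grp_commE. Qed.

Lemma gpowE (g : Gg) k : gpow mul one g k = g ^+ k.
Proof. by elim: k => // k IHk; rewrite expgS -IHk. Qed.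

End GroupOf.

Section TopologicalGroup.
Variables (G : topologicalType) (mul : G -> G -> G) (inv : G -> G) (one : G).
Hypothesis hG : group_axioms mul inv one.
Local Notation Gg := (group_of hG).
Hypotheses (mul_cont : continuous (fun p : Gg * Gg => p.1 * p.2))
  (inv_cont : continuous (fun x : Gg => x^-1)).

Lemma continuousM (X : topologicalType) (f h : X -> Gg) :
  continuous f -> continuous h -> continuous (fun x => f x * h x).
Proof.
move=> cf ch x; apply: continuous2_cvg; first exact: (mul_cont (f x, h x)).
- exact: cf.
- exact: ch.
Qed.

Lemma continuousV (X : topologicalType) (f : X -> Gg) :
  continuous f -> continuous (fun x => (f x)^-1).
Proof. by move=> cf x; apply: continuous_comp; [exact: cf | exact: inv_cont]. Qed.

Lemma continuous_conjg (X : topologicalType) (f h : X -> Gg) :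
  continuous f -> continuous h -> continuous (fun x => f x ^ h x).
Proof. by move=> cf ch; apply: continuousM; [exact: continuousV | exact: continuousM]. Qed.

Lemma continuous_iter_commg m (g : Gg) :
  continuous (iter m (fun z => [~ z, g])).
Proof.
elim: m => [x|m IHm]; first exact: cvg_id.
apply: continuousM; first exact: continuousV.
apply: continuousM; first exact: cst_continuous.
by apply: continuousM => //; exact: cst_continuous.
Qed.

Lemma continuous_mulr (b : Gg) : continuous (fun y : Gg => y * b).
Proof.
by apply: (@continuousM Gg id (fun=> b)) => [y|]; [exact: cvg_id | exact: cst_continuous].
Qed.

Lemma continuous_mull (a : Gg) : continuous (fun y : Gg => a * y).
Proof.
by apply: (@continuousM Gg (fun=> a) id) => [|y]; [exact: cst_continuous | exact: cvg_id].
Qed.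

Lemma subgroup_nbhs1_open (N : set Gg) :
  (forall x y, N x -> N y -> N (x * y)) -> nbhs (1 : Gg) N -> open N.
Proof.
move=> NM N1; rewrite openE => x Nx.
have translate : x^-1 * z @[z --> x] --> (1 : Gg).
  by rewrite -(mulVg x); exact: continuous_mull.
have : nbhs x [set z | N (x^-1 * z)] := translate N N1.
by apply: filterS => z /(NM _ _ Nx); rewrite mulVKg.
Qed.

Hypothesis cptG : compact [set: Gg].

Lemma open_subgroup_expg (N : set Gg) (g : Gg) : open N -> N 1 ->
  (forall x y, N x -> N y -> N (x * y)) -> (forall x, N x -> N x^-1) ->
  exists2 k, (0 < k)%N & N (g ^+ k).
Proof.
move=> oN N1 NM NV.
(* Two powers g^i, g^j with i < j fall in N p for a cluster point p of (g^j). *)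
have [p [_ clp]] := @cptG (g ^+ j @[j --> \oo]) _ filterT.
have Np : nbhs p [set y | N (y * p^-1)].
  by apply: (continuous_mulr p^-1 p); rewrite mulgV; exact: open_nbhs_nbhs.
pose tail i := [set y | exists2 j, (i <= j)%N & y = g ^+ j].
have Ftail i : (g ^+ j @[j --> \oo]) (tail i).
  by apply: filterS (nbhs_infty_ge i) => j ij; exists j.
have [_ [[i _ ->] Ni]] := clp _ _ (Ftail 0%N) Np.
have [_ [[j ij ->] Nj]] := clp _ _ (Ftail i.+1) Np.
exists (j - i)%N; first by rewrite subn_gt0.
by rewrite expgnFr ?(ltnW ij) // -(mulgKA p^-1); exact: NM _ _ Nj (NV _ Ni).
Qed.

Lemma conj_stab_nbhs1 (C : set Gg) : clopen C -> nbhs (1 : Gg) (conj_stab C).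
Proof.
move=> clC.
have cpt2 : compact [set: Gg * Gg] by rewrite -setXTT; exact: compact_setX.
pose P x (yc : Gg * Gg) := C yc.2 <-> C (yc.2 * x ^ yc.1).
have local yc : [set: Gg * Gg] yc -> \forall yc' \near yc & x \near (1 : Gg), P x yc'.
  move=> _; pose f (q : (Gg * Gg) * Gg) := q.1.2.
  have cf : continuous f by move=> q; apply: continuous_comp; [exact: cvg_fst | exact: cvg_snd].
  have cy : continuous (fun q : (Gg * Gg) * Gg => q.1.1).
    by move=> q; apply: continuous_comp; [exact: cvg_fst | exact: cvg_fst].
  have cx : continuous (fun q : (Gg * Gg) * Gg => q.2) by move=> q; exact: cvg_snd.
  apply: (@near_clopen_iff _ _ C f (fun q => q.1.2 * q.2 ^ q.1.1) (yc, 1) clC).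
  - exact: cf.
  - exact: (continuousM cf (continuous_conjg cx cy)).
  - by rewrite /f /= conj1g mulg1.
(* Tube lemma: compactness of G * G makes the neighbourhood of 1 uniform. *)
have near1 := (compact_near_coveringP _).1 cpt2 Gg _ P (nbhs_filter (1 : Gg)) local.
by apply: filterS near1 => x Px y c; exact: (Px (y, c)).
Qed.

Hypotheses (hsdfG : hausdorff_space Gg) (tdG : totally_disconnected [set: Gg]).

Lemma open_normal_subgroup_sub (W : set Gg) : open W -> W 1 ->
  exists N : set Gg, [/\ open N, normal_subgroup mul inv one N & N `<=` W].
Proof.
move=> oW W1.
have [C [clC C1 CW]] := totally_disconnected_clopen_nbhs cptG hsdfG _ _ tdG oW W1.
have nN := conj_stab_normal C.
exists (conj_stab C); split => //.
- by apply: subgroup_nbhs1_open; [case: nN | exact: conj_stab_nbhs1].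
- exact: subset_trans (conj_stab_sub C1) CW.
Qed.

Lemma engel_sink_locally_constant (g : Gg) (E : set Gg) :
  countable E -> engel_sink mul inv g E ->
  exists m (e : Gg) (U : set Gg),
    [/\ open U, U !=set0 & forall x, U x -> iter m.+1 (fun z => [~ z, g]) x = e].
Proof.
move=> cE sink.
pose F (me : nat * Gg) := [set x | iter me.1.+1 (fun z => [~ z, g]) x = me.2].
have [[m e] _ [x Fx]] : exists2 me, ([set: nat] `*` E) me & (F me)° !=set0.
  apply: compact_countable_closed_cover_interior => //.
  - by exists 1.
  - exact: countableX.
  - move=> [m e] _; apply: (@preimage_closed _ _ _ [set e]).
      by move=> y _; exact: continuous_iter_commg.
    exact/accessible_closed_set1/hausdorff_accessible.
  - move=> x; have [[|n] [// _ sinkx]] := sink x.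
    exists (n, engel_comm mul inv x n.+1 g); first by split=> //; exact: sinkx.
    by rewrite /F engel_commE.
exists m, e, (F (m, e))°; split; first exact: open_interior.
- by exists x.
- by move=> y /interior_subset.
Qed.

Lemma engel_sink_coset_commute (g : Gg) (E : set Gg) :
  countable E -> engel_sink mul inv g E ->
  exists m k, (0 < k)%N /\ exists (N : set Gg) (b : Gg),
    [/\ open N, normal_subgroup mul inv one N &
       forall n : Gg, N n -> [~ iter m.+1 (fun z => [~ z, g]) (n * b), g ^+ k] = 1].
Proof.
move=> cE sink.
have [m [e [U [oU [b Ub] Ue]]]] := engel_sink_locally_constant cE sink.
have [N [oN nN NUb]] : exists N : set Gg, [/\ open N, normal_subgroup mul inv one N &
    N `<=` [set y | U (y * b)]].
  apply: open_normal_subgroup_sub; last by rewrite /= mul1g.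
  exact: (continuousP _).1 (continuous_mulr b) U oU.
have [N1 NM NV _] := nN.
have [k k0 Nk] := open_subgroup_expg N g oN N1 NM NV.
exists m, k; split => //; exists N, b; split => // n Nn.
apply/eqP/conjg_fixP; rewrite conjg_iter_commg; last first.
  by apply/conjg_fixP; rewrite commgXg.
rewrite [RHS]Ue; last exact: NUb Nn.
apply: Ue; have := NUb _ (normal_conjg_coset _ b _ nN Nn Nk).
by rewrite /= mulgVK.
Qed.

End TopologicalGroup.

Theorem lemma2p7 (G : topologicalType) (mul : G -> G -> G) (inv : G -> G)
  (one : G) (hG : is_profinite_group mul inv one) (g : G)
  (hE : exists E : set G, countable E /\ engel_sink mul inv g E) :
  exists (i k : nat), (0 < i)%N /\ (0 < k)%N /\
    exists (N : set G) (b : G),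
      open N /\ normal_subgroup mul inv one N /\
      forall n : G, N n ->
        grp_comm mul inv (engel_comm mul inv (mul n b) i g) (gpow mul one g k) = one.
Proof.
case: hG => hG [mul_cont [inv_cont [cptG [hsdfG tdG]]]].
have [E [cE sink]] := hE.
have [m [k [k0 [N [b [oN nN Ncomm]]]]]] :=
  engel_sink_coset_commute (hG := hG) mul_cont inv_cont cptG hsdfG tdG cE sink.
exists m.+1, k; do 2 split => //; exists N, b; do 2 split => //.
by move=> n Nn; rewrite (engel_commE hG) (gpowE hG) (grp_commE hG); exact: Ncomm.
Qed.
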